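(* Let $\Phi$ be a Young function, $\varphi\in\mathcal{G}^{\rm dec}_1$, $n\ge2$, $k\in[2,n]\cap\mathbb{N}$ and $a_0,\dots,a_{k-1}>0$. Then, writing points of $\mathbb{R}^n$ as $(x_0,\dots,x_{n-1})$, \[ \bigl\|\chi_{\prod_{j=0}^{k-1}[0,a_j]\times\mathbb{R}^{n-k}}\bigr\|_{\mathcal{M}_\Phi^\varphi,\mathrm{cube}}=\sup_{R>0}\frac1{\varphi(R)}\Phi^{-1}\Bigl(\frac{R^k}{\prod_{j=0}^{k-1}\min(a_j,R)}\Bigr)^{-1}. \]
   Context: A Young function is a convex $\Phi:[0,\infty)\to[0,\infty)$ with $\Phi(0)=0$, $\lim_{t\to\infty}\Phi(t)=\infty$; its generalized inverse is $\Phi^{-1}(u)=\inf\{t\ge0:\Phi(t)>u\}$ for $u\in[0,\infty)$. $\mathcal{G}^{\rm dec}_1$ is the set of $\varphi:(0,\infty)\to(0,\infty)$ that are almost decreasing (there is $C>0$ with $C\varphi(r)\ge\varphi(s)$ for $r<s$) and submultiplicative ($\varphi(rs)\le C\varphi(r)\varphi(s)$). For $a\in\mathbb{R}^n$, $r>0$, $Q(a,r)=\{x:\max_i|x_i-a_i|\le r\}$ is the cube of side length $2r$; $\|f\|_{\Phi,Q}=\inf\{\lambda>0:\frac1{|Q|}\int_Q\Phi(|f|/\lambda)\le1\}$, and the cube version of the Orlicz–Morrey norm is $\|f\|_{\mathcal{M}_\Phi^\varphi,\mathrm{cube}}=\sup_{a\in\mathbb{R}^n,r>0}\frac1{\varphi(2r)}\|f\|_{\Phi,Q(a,r)}$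 (equivalent up to constants to the ball version $\sup_{a,r}\frac1{\varphi(r)}\|f\|_{\Phi,B(a,r)}$). $\chi_E$ is the characteristic function of $E$. *)

From HB Require Import structures.
From mathcomp Require Import all_boot all_order all_algebra.
From mathcomp Require Import all_classical all_reals all_analysis.
Set Implicit Arguments. Unset Strict Implicit. Unset Printing Implicit Defensive.
Import Order.TTheory GRing.Theory Num.Theory.
Local Open Scope classical_set_scope.
Local Open Scope ring_scope.

Section Defs.
Variable R : realType.

Definition young (Phi : R -> R) : Prop :=
  [/\ Phi 0 = 0,
      (forall t, 0 <= t -> 0 <= Phi t),
      (forall s t l, 0 <= s -> 0 <= t -> 0 <= l <= 1 ->
         Phi (l * s + (1 - l) * t) <= l * Phi s + (1 - l) * Phi t)
    & Phi x @[x --> +oo] --> +oo].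

Definition young_inv (Phi : R -> R) (u : R) : R :=
  inf [set t : R | 0 <= t /\ u < Phi t].

Definition Gdec1 (phi : R -> R) : Prop :=
  [/\ (forall r, 0 < r -> 0 < phi r),
      (exists2 C : R, 0 < C & forall r s, 0 < r -> r < s -> phi s <= C * phi r)
    & (exists2 C : R, 0 < C & forall r s, 0 < r -> 0 < s ->
          phi (r * s) <= C * phi r * phi s)].

(* Points of R^n are n-tuples (x_0, ..., x_{n-1}).
   Lebesgue integral on R^n of a nonnegative function, computed as the
   iterated one-dimensional Lebesgue integral (Tonelli). *)
Fixpoint integral_Rn (n : nat) : (n.-tuple R -> \bar R) -> \bar R :=
  match n return (n.-tuple R -> \bar R) -> \bar R with
  | 0 => fun F => F [tuple]
  | n'.+1 => fun F =>
      (\int[@lebesgue_measure R]_t integral_Rn (fun x : n'.-tuple R => F [tuple of t :: x]))%E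
  end.

(* the cube Q(a, r) = {x : max_i |x_i - a_i| <= r}, of side length 2r *)
Definition cube (n : nat) (a : n.-tuple R) (r : R) : set (n.-tuple R) :=
  [set x | forall i : 'I_n, `|tnth x i - tnth a i| <= r].

(* Luxemburg norm ||f||_{Phi,Q(a,r)}; |Q(a,r)| = (2r)^n *)
Definition lux_norm (Phi : R -> R) (n : nat) (f : n.-tuple R -> R)
    (a : n.-tuple R) (r : R) : \bar R :=
  ereal_inf [set (l%:E) | l in [set l : R | 0 < l /\
     (((2 * r) ^+ n)^-1%:E *
        integral_Rn (fun x => (\1_(cube a r) x * Phi (`|f x| / l))%:E) <= 1)%E]].

Definition OM_cube_norm (Phi phi : R -> R) (n : nat) (f : n.-tuple R -> R)
    : \bar R :=
  ereal_sup [set z | exists (a : n.-tuple R) (r : R),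
      0 < r /\ z = ((phi (2 * r))^-1%:E * lux_norm Phi f a r)%E].

End Defs.

From HB Require Import structures.
From mathcomp Require Import all_boot all_order all_algebra.
From mathcomp Require Import all_classical all_reals all_analysis.
From mathcomp Require Import measurable_realfun lra.
Import Order.TTheory GRing.Theory Num.Theory.
Local Open Scope classical_set_scope.
Local Open Scope ring_scope.

(* For an indicator 1_E the Luxemburg integral over a cube Q is Phi(1/l) |Q n E|, so
   ||1_E||_{Phi,Q} = 1 / Phi^{-1}(|Q| / |Q n E|).  When E = prod_{j<k} [0,a_j] x R^{n-k}
   and Q has side s = 2r, |Q n E| <= s^{n-k} prod_{j<k} min(a_j, s), with equality for
   Q = [0,s]^n; hence the cubes of side s contribute exactly
   1 / (phi(s) Phi^{-1}(s^k / prod_{j<k} min(a_j, s))) to the supremum. *)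

Section Boxes.
Context {R : realType}.

Lemma lebesgue_measure_itvcc (l h : R) :
  lebesgue_measure `[l, h]%classic = (Num.max (h - l) 0)%:E.
Proof.
rewrite lebesgue_measure_itv /= lte_fin.
by case: ltP => lh; [rewrite max_l ?subr_ge0 ?ltW | rewrite max_r // subr_le0].
Qed.

Lemma integral_Rn_box n (c : R) (lo hi : nat -> R) : 0 <= c ->
  integral_Rn (fun x : n.-tuple R =>
    (c * \prod_(i < n) (\1_`[lo i, hi i] : R -> R) (tnth x i))%:E) =
  (c * \prod_(i < n) Num.max (hi i - lo i) 0)%:E.
Proof.
elim: n c lo hi => [|n IH] c lo hi c0 /=; first by rewrite !big_ord0.
have peel t (x : n.-tuple R) :
  c * \prod_(i < n.+1) (\1_`[lo i, hi i] : R -> R) (tnth [tuple of t :: x] i) =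
  c * (\1_`[lo 0%N, hi 0%N] : R -> R) t *
    \prod_(i < n) (\1_`[lo i.+1, hi i.+1] : R -> R) (tnth x i).
  by rewrite big_ord_recl tnth0 mulrA; under eq_bigr => i _ do rewrite tnthS.
under eq_integral => t _.
  under eq_fun => x do rewrite peel.
  rewrite (IH _ (fun i => lo i.+1) (fun i => hi i.+1)) ?mulr_ge0 ?indic_ge0 //.
  rewrite mulrAC EFinM.
  over.
rewrite ge0_integralZl_EFin ?integral_indic //= ?setIT ?lebesgue_measure_itvcc.
- by rewrite -EFinM big_ord_recl mulrAC mulrA.
- exact/measurable_EFinP/measurable_indic.
- by rewrite mulr_ge0 // prodr_ge0 // => i _; rewrite le_max lexx orbT.
Qed.

Definition box {n : nat} (lo hi : nat -> R) : set (n.-tuple R) :=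
  [set x | forall i : 'I_n, tnth x i \in `[lo i, hi i]].

Lemma prod_indic_box n (lo hi : nat -> R) (x : n.-tuple R) :
  \prod_(i < n) (\1_`[lo i, hi i] : R -> R) (tnth x i) =
  \1_(box lo hi : set (n.-tuple R)) x.
Proof.
have [xB|xNB] := pselect ((box lo hi : set (n.-tuple R)) x).
  by rewrite indicE mem_set // big1 // => i _; rewrite indicE mem_set //; apply: xB.
have [i xi] := (existsNP _).2 xNB.
by rewrite indicE memNset // (bigD1 i) //= indicE memNset ?mul0r.
Qed.

End Boxes.

Section YoungFunction.
Context {R : realType} {Phi : R -> R}.
Hypothesis youngPhi : young Phi.

Let young0 : Phi 0 = 0. Proof. by case: youngPhi. Qed.

Lemma young_ge0 t : 0 <= t -> 0 <= Phi t.
Proof. by case: youngPhi => _ + _ _; apply. Qed.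

Lemma young_mulr_le s t : 0 <= s <= t -> 0 < t -> Phi s * t <= s * Phi t.
Proof.
move=> /andP[s0 st] t_gt0; case: youngPhi => _ _ convex _.
have t0 := ltW t_gt0.
have st01 : 0 <= s / t <= 1 by rewrite divr_ge0 //= ler_pdivrMr // mul1r.
have := convex t 0 (s / t) t0 (lexx 0) st01.
rewrite !mulr0 !addr0 young0 mulr0 addr0 divfK ?gt_eqF //.
by rewrite -ler_pdivlMr // mulrAC.
Qed.

Lemma young_le s t : 0 <= s <= t -> Phi s <= Phi t.
Proof.
move=> /andP[s0 st]; have [t0|t_gt0] := eqVneq t 0.
  by rewrite (@le_anti _ _ s t) // st t0 s0.
have {}t_gt0 : 0 < t by rewrite lt_neqAle eq_sym t_gt0 (le_trans s0).
have := young_mulr_le s t; rewrite s0 st => /(_ isT t_gt0) Phist.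
by rewrite -(ler_pM2r t_gt0) (le_trans Phist) // mulrC ler_wpM2l // young_ge0 // ltW.
Qed.

Let young_level_neq0 u : [set t | 0 <= t /\ u < Phi t] !=set0.
Proof.
case: youngPhi => _ _ _ /cvgryPgt /(_ u) [M [_ PhiM]].
exists (Num.max M 0 + 1); split; first by rewrite addr_ge0 // le_max lexx orbT.
by apply: PhiM; rewrite (le_lt_trans (_ : M <= Num.max M 0)) ?le_max ?lexx // ltrDl.
Qed.

Lemma young_inv_gt0 u : 0 < u -> 0 < young_inv Phi u.
Proof.
move=> u0; pose b := Num.min 1 (u / (Phi 1 + 1)).
have Phi1 : 0 <= Phi 1 := young_ge0 _ ler01.
have b0 : 0 < b by rewrite lt_min ltr01 divr_gt0 // ltr_wpDl.
apply: (lt_le_trans b0); apply: lb_le_inf; first exact: young_level_neq0.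
move=> t [t0 uPhit]; rewrite leNgt; apply/negP => tb.
have t1 : t <= 1 by rewrite ltW // (lt_le_trans tb) // ge_min lexx.
have := young_mulr_le t 1; rewrite t0 t1 mulr1 => /(_ isT ltr01) Phit.
have : t * (Phi 1 + 1) < u.
  by rewrite -ltr_pdivlMr ?ltr_wpDl // (lt_le_trans tb) // ge_min lexx orbT.
apply/negP; rewrite -leNgt (le_trans (ltW uPhit)) // (le_trans Phit) //.
by rewrite ler_wpM2l // lerDl.
Qed.

Lemma young_le_of_lt_inv u s : 0 <= s -> s < young_inv Phi u -> Phi s <= u.
Proof.
move=> s0 s_lt; rewrite leNgt; apply: contraTN s_lt => uPhis.
by rewrite -leNgt; apply: ge_inf => //; exists 0 => t [].
Qed.

Lemma young_gt_of_gt_inv u s : young_inv Phi u < s -> u < Phi s.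
Proof.
move=> /(inf_lt (young_level_neq0 u)) [t [t0 uPhit] ts].
by rewrite (lt_le_trans uPhit) // young_le // t0 ltW.
Qed.

Lemma young_level_inf m V : 0 < m -> 0 < V ->
  ereal_inf [set l%:E | l in [set l | 0 < l /\ Phi l^-1 * m <= V]] =
  ((young_inv Phi (V / m))^-1)%:E.
Proof.
move=> m0 V0; set t0 := young_inv Phi (V / m).
have t0_gt0 : 0 < t0 by rewrite young_inv_gt0 // divr_gt0.
apply/le_anti/andP; split.
- apply/lee_addgt0Pr => e e0; apply: ereal_inf_lbound.
  have l0 : 0 < t0^-1 + e by rewrite addr_gt0 // invr_gt0.
  exists (t0^-1 + e); last by rewrite EFinD.
  split=> //; rewrite -ler_pdivlMr //.
  apply: young_le_of_lt_inv; first by rewrite invr_ge0 ltW.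
  by rewrite -[ltRHS]invrK ltf_pV2 ?posrE ?invr_gt0 // ltrDl.
- apply: le_ereal_inf_tmp => _ [l [l0 Phil] <-]; rewrite lee_fin leNgt.
  apply/negP => l_lt; have : t0 < l^-1 by rewrite -[ltLHS]invrK ltf_pV2 ?posrE ?invr_gt0.
  by move=> /young_gt_of_gt_inv; rewrite ltr_pdivrMr // ltNge Phil.
Qed.

Lemma lux_norm_indicE {n} {E : set (n.-tuple R)} {c r m} : 0 < r ->
  (forall s, 0 <= s ->
     integral_Rn (fun x => (s * \1_(cube c r `&` E) x)%:E) = (s * m)%:E) ->
  lux_norm Phi \1_E c r =
  ereal_inf [set l%:E | l in [set l | 0 < l /\ Phi l^-1 * m <= (2 * r) ^+ n]].
Proof.
move=> r0 vol_m; have V0 : 0 < (2 * r) ^+ n by rewrite exprn_gt0 ?mulr_gt0.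
have levelE l : 0 < l ->
    (((2 * r) ^+ n)^-1%:E *
       integral_Rn (fun x => (\1_(cube c r) x * Phi (`|\1_E x| / l))%:E) <= 1)%E =
    (Phi l^-1 * m <= (2 * r) ^+ n).
  move=> l0; rewrite (_ : integral_Rn _ = (Phi l^-1 * m)%:E).
    by rewrite -EFinM lee_fin mulrC ler_pdivrMr // mul1r.
  rewrite -vol_m ?young_ge0 ?invr_ge0 ?ltW //; congr integral_Rn.
  apply/funext => x; congr _%:E; have [Ex|NEx] := pselect (E x).
    by rewrite indicI /= (indicE _ E) mem_set // normr1 div1r mulr1 mulrC.
  by rewrite indicI /= (indicE _ E) memNset // normr0 mul0r young0 !mulr0.
rewrite /lux_norm; congr (ereal_inf (EFin @` _)); apply/seteqP.
by split=> l [l0 Hl]; split; rewrite // ?levelE // -levelE.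
Qed.

End YoungFunction.

Lemma in_itv_cube_cylinder (R : realType) (b : bool) (y c r A : R) :
  (y \in `[if b then Num.max (c - r) 0 else c - r,
           if b then Num.min (c + r) A else c + r]) =
  (`|y - c| <= r) && (b ==> (0 <= y <= A)).
Proof.
rewrite in_itv /= ler_distl; case: b => /=; last by rewrite andbT.
by rewrite ge_max le_min andbACA.
Qed.

Lemma itv_length_le (R : realType) (c r A : R) : 0 < A -> 0 < r ->
  Num.max (Num.min (c + r) A - Num.max (c - r) 0) 0 <= Num.min A (2 * r).
Proof.
move=> A0 r0; set m := Num.min (c + r) A; set M := Num.max (c - r) 0.
have /andP[m1 m2] : (m <= c + r) && (m <= A) by rewrite -le_min.
have /andP[M1 M2] : (c - r <= M) && (0 <= M) by rewrite -ge_max.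
by rewrite ge_max !le_min; apply/and3P; split; [apply/andP; split | lra | lra]; lra.
Qed.

Lemma prod_ord_if_lt (R : comPzSemiRingType) (F : nat -> R) (x : R) k n :
  (k <= n)%N ->
  \prod_(i < n) (if (i < k)%N then F i else x) = (\prod_(i < k) F i) * x ^+ (n - k).
Proof.
move=> kn; have [m ->] : exists m, n = (k + m)%N by exists (n - k)%N; rewrite subnKC.
rewrite addKn big_split_ord /=; congr (_ * _).
  by apply: eq_bigr => i _; rewrite ltn_ord.
by rewrite (eq_bigr (fun=> x)) ?prodr_const ?card_ord // => i _; rewrite ltnNge leq_addr.
Qed.

Lemma divr_expr_subn {R : fieldType} {k n : nat} (s P : R) : (k <= n)%N -> s != 0 ->
  s ^+ n / (P * s ^+ (n - k)) = s ^+ k / P.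
Proof.
move=> kn s0; rewrite -{1}(subnKC kn) exprD invfM mulrACA divff ?mulr1 //.
by rewrite expf_neq0.
Qed.

Section Cylinder.
Context {R : realType}.
Variables (n k : nat) (a : nat -> R).
Hypotheses (k_le_n : (k <= n)%N) (a_gt0 : forall j, (j < k)%N -> 0 < a j).

Definition cylinder : set (n.-tuple R) :=
  [set x | forall i : 'I_n, (i < k)%N -> 0 <= tnth x i <= a i].

Definition cube_cylinder_lo (c : n.-tuple R) (r : R) (i : nat) : R :=
  if (i < k)%N then Num.max (nth 0 c i - r) 0 else nth 0 c i - r.

Definition cube_cylinder_hi (c : n.-tuple R) (r : R) (i : nat) : R :=
  if (i < k)%N then Num.min (nth 0 c i + r) (a i) else nth 0 c i + r.

Lemma cube_cylinderE c r :
  cube c r `&` cylinder = box (cube_cylinder_lo c r) (cube_cylinder_hi c r).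
Proof.
apply/seteqP; split=> x.
  move=> [xc xE] i; rewrite in_itv_cube_cylinder -tnth_nth xc /=.
  by apply/implyP; apply: xE.
by move=> xB; split=> i; move: (xB i);
  rewrite in_itv_cube_cylinder -tnth_nth => /andP[? /implyP].
Qed.

Definition cube_cylinder_volume (c : n.-tuple R) (r : R) : R :=
  \prod_(i < n) Num.max (cube_cylinder_hi c r i - cube_cylinder_lo c r i) 0.

Lemma integral_Rn_cube_cylinder c r s : 0 <= s ->
  integral_Rn (fun x => (s * \1_(cube c r `&` cylinder) x)%:E) =
  (s * cube_cylinder_volume c r)%:E.
Proof.
rewrite cube_cylinderE; under eq_fun => x do rewrite -prod_indic_box.
exact: integral_Rn_box.
Qed.

Lemma cube_cylinder_volume_le c r : 0 < r ->
  cube_cylinder_volume c r <= \prod_(j < k) Num.min (a j) (2 * r) * (2 * r) ^+ (n - k).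
Proof.
move=> r0; rewrite -(prod_ord_if_lt _ (fun j => Num.min (a j) (2 * r))) //.
apply: ler_prod => i _.
rewrite le_max lexx orbT /= /cube_cylinder_hi /cube_cylinder_lo.
case: ifP => ik; first by apply: itv_length_le => //; apply: a_gt0.
by rewrite ge_max; apply/andP; split; lra.
Qed.

Lemma corner_cube_cylinder_volume r : 0 < r ->
  cube_cylinder_volume [tuple of nseq n r] r =
  \prod_(j < k) Num.min (a j) (2 * r) * (2 * r) ^+ (n - k).
Proof.
move=> r0; rewrite -(prod_ord_if_lt _ (fun j => Num.min (a j) (2 * r))) //.
apply: eq_bigr => i _.
rewrite /cube_cylinder_hi /cube_cylinder_lo -tnth_nth tnth_nseq.
case: ifP => ik.
  rewrite subrr maxxx subr0 minC max_l; first by congr Num.min; lra.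
  by rewrite le_min ltW ?a_gt0 //=; lra.
by rewrite max_l; lra.
Qed.

Variable Phi : R -> R.
Hypothesis youngPhi : young Phi.

Lemma lux_norm_cylinder_le c r : 0 < r ->
  (lux_norm Phi \1_cylinder c r <=
   ((young_inv Phi ((2 * r) ^+ k / \prod_(j < k) Num.min (a j) (2 * r)))^-1)%:E)%E.
Proof.
move=> r0; have r20 : 0 < 2 * r by rewrite mulr_gt0.
set G := \prod_(j < k) Num.min (a j) (2 * r) * (2 * r) ^+ (n - k).
have G0 : 0 < G.
  by rewrite mulr_gt0 ?exprn_gt0 // prodr_gt0 // => j _; rewrite lt_min a_gt0.
rewrite (lux_norm_indicE youngPhi r0 (integral_Rn_cube_cylinder c r)).
rewrite -(divr_expr_subn _ _ k_le_n) ?gt_eqF // -/G -young_level_inf ?exprn_gt0 //.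
apply: ereal_inf_le_tmp => _ [l [l0 PhiG] <-]; exists l => //; split=> //.
rewrite (le_trans _ PhiG) // ler_wpM2l ?(young_ge0 youngPhi) ?invr_ge0 ?(ltW l0) //.
exact: cube_cylinder_volume_le.
Qed.

Lemma lux_norm_corner_cylinder r : 0 < r ->
  lux_norm Phi \1_cylinder [tuple of nseq n r] r =
  ((young_inv Phi ((2 * r) ^+ k / \prod_(j < k) Num.min (a j) (2 * r)))^-1)%:E.
Proof.
move=> r0; have r20 : 0 < 2 * r by rewrite mulr_gt0.
rewrite (lux_norm_indicE youngPhi r0 (integral_Rn_cube_cylinder _ r)).
rewrite corner_cube_cylinder_volume // young_level_inf ?exprn_gt0 //.
  by rewrite divr_expr_subn ?gt_eqF.
by rewrite mulr_gt0 ?exprn_gt0 // prodr_gt0 // => j _; rewrite lt_min a_gt0.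
Qed.

End Cylinder.

Theorem lemma4p13 (R : realType) (Phi phi : R -> R) (n k : nat)
  (a : nat -> R) :
  young Phi -> Gdec1 phi -> (2 <= n)%N -> (2 <= k <= n)%N ->
  (forall j, (j < k)%N -> 0 < a j) ->
  OM_cube_norm Phi phi
    (\1_[set x : n.-tuple R | forall i : 'I_n, (i < k)%N ->
                               0 <= tnth x i <= a i] : n.-tuple R -> R)
  = ereal_sup [set ((phi r)^-1 *
        (young_inv Phi (r ^+ k / \prod_(j < k) Num.min (a j) r))^-1)%:E
               | r in [set r : R | 0 < r]].
Proof.
move=> youngPhi [phi_gt0 _ _] _ /andP[_ k_le_n] a_gt0.
rewrite -/(cylinder n k a) /OM_cube_norm; apply/le_anti/andP; split.
- apply: ge_ereal_sup => _ [c [r [r0 ->]]].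
  have r20 : 0 < 2 * r by rewrite mulr_gt0.
  apply: le_ereal_sup_tmp; eexists; first by exists (2 * r).
  rewrite EFinM lee_wpmul2l ?lee_fin ?invr_ge0 ?(ltW (phi_gt0 _ r20)) //.
  exact: lux_norm_cylinder_le.
- apply: ge_ereal_sup => _ [s s0 <-].
  have r0 : 0 < s / 2 by rewrite divr_gt0.
  have s2 : 2 * (s / 2) = s by rewrite mulrC divfK ?pnatr_eq0.
  apply: ereal_sup_ubound; exists [tuple of nseq n (s / 2)], (s / 2); split=> //.
  by rewrite s2 lux_norm_corner_cylinder // s2 EFinM.
Qed.
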